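(* Let $J\subseteq\mathbb{M}_2$ be a bigraded ideal and $f,g:\Sigma^{p,q}J\to\mathbb{M}_2$ two bigraded $\mathbb{M}_2$-module homomorphisms. If there is a nonzero homogeneous element $x\in J$ with $f(x)\neq0$ and $f(x)=g(x)$, then $f=g$.
   Context: $\mathbb{M}_2$ is the bigraded commutative $\mathbb{F}_2$-algebra with $\mathbb{F}_2$-basis the elements $\rho^m\tau^n$ ($m,n\ge0$) in bidegree $(m,m+n)$ and $\frac{\theta}{\rho^m\tau^n}$ ($m,n\ge 0$) in bidegree $(-m,-2-m-n)$; multiplication: $\rho^a\tau^b\cdot\rho^c\tau^d=\rho^{a+c}\tau^{b+d}$, $\rho^a\tau^b\cdot\frac{\theta}{\rho^c\tau^d}=\frac{\theta}{\rho^{c-a}\tau^{d-b}}$ if $a\le c,b\le d$ and $0$ otherwise, and the product of two elements of the form $\frac{\theta}{\rho^c\tau^d}$ is $0$. $\Sigma^{p,q}J$ is the shift with $(\Sigma^{p,q}J)^{a,b}=J^{a-p,b-q}$; module homomorphisms preserve bidegree. *)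

From Stdlib Require Import ZArith Bool.
Open Scope Z_scope.

(* Bidegrees of the basis elements of M_2:
   rho^m tau^n        sits in (m, m+n)          : exactly the (a,b) with 0 <= a <= b;
   theta/(rho^m tau^n) sits in (-m, -2-m-n)     : exactly the (a,b) with a <= 0, b <= a-2.
   Each bidegree contains at most one basis element, so the homogeneous
   component M_2^{a,b} is F_2 (= bool) if [M2deg a b], and 0 otherwise. *)
Definition posc (a b : Z) : bool := (0 <=? a) && (a <=? b).
Definition negc (a b : Z) : bool := (a <=? 0) && (b <=? a - 2).
Definition M2deg (a b : Z) : bool := posc a b || negc a b.

(* x : bool is an element of M_2^{a,b} (x = true is the basis element, if any). *)
Definition hom_elt (a b : Z) (x : bool) : Prop := x = true -> M2deg a b = true.

(* Whether the product of the basis elements in bidegrees (a,b) and (c,d) is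
   nonzero, following the multiplication table of M_2:
   rho^a tau^b * rho^c tau^d  = rho^(a+c) tau^(b+d)  (always nonzero);
   rho^a tau^b * theta/(rho^c tau^d) nonzero iff a <= c, b <= d, i.e. iff the
   product bidegree lies in the negative cone; theta-products vanish. *)
Definition mul_nz (a b c d : Z) : bool :=
  (posc a b && posc c d)
  || (posc a b && negc c d && negc (a + c) (b + d))
  || (negc a b && posc c d && negc (a + c) (b + d)).

Definition mulM2 (a b : Z) (r : bool) (c d : Z) (x : bool) : bool :=
  r && x && mul_nz a b c d.

Record bigraded_ideal (J : Z -> Z -> bool -> Prop) : Prop := {
  J_sub  : forall a b x, J a b x -> hom_elt a b x;
  J_zero : forall a b, J a b false;
  J_add  : forall a b x y, J a b x -> J a b y -> J a b (xorb x y);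
  J_mul  : forall a b r c d x, hom_elt a b r -> J c d x ->
             J (a + c) (b + d) (mulM2 a b r c d x)
}.

(* A bigraded M_2-module homomorphism f : Sigma^{p,q} J -> M_2.
   (Sigma^{p,q} J)^{a+p,b+q} = J^{a,b}; we write [f a b x] for f applied to
   x in J^{a,b}, viewed in (Sigma^{p,q} J)^{a+p,b+q}; its value lies in
   M_2^{a+p,b+q}.  Values of [f a b] outside J^{a,b} are irrelevant. *)
Record is_hom (p q : Z) (J : Z -> Z -> bool -> Prop) (f : Z -> Z -> bool -> bool) : Prop := {
  hom_deg : forall a b x, J a b x -> hom_elt (a + p) (b + q) (f a b x);
  hom_add : forall a b x y, J a b x -> J a b y ->
              f a b (xorb x y) = xorb (f a b x) (f a b y);
  hom_lin : forall a b r c d x, hom_elt a b r -> J c d x ->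
              f (a + c) (b + d) (mulM2 a b r c d x)
              = mulM2 a b r (c + p) (d + q) (f c d x)
}.

(* Homogeneous elements of M_2 are single basis monomials, so any two nonzero
   x, y in J have a common nonzero multiple z = r x = s y.  Linearity gives
   f z = r f(x) and f z = s f(y), and likewise for g; as f x = g x, the two
   homomorphisms agree at z and hence at y, provided one of r f(x), s f(y) is
   nonzero.  The multipliers can be chosen that way because a nonzero value
   f(x) has a constrained bidegree: if x lies in the theta-part of M_2, so
   does f(x), since rho^(1-a) annihilates x but no element of positive bidegree. *)
From Stdlib Require Import ZArith Bool Lia ssreflect ssrbool.
Open Scope Z_scope.
Set Implicit Arguments.
Unset Strict Implicit.

Ltac bideg_lia := unfold is_true, mulM2, mul_nz, M2deg, posc, negc in *; lia.

Lemma mul_nz_M2deg_l (a b c d : Z) : mul_nz a b c d -> M2deg a b.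
Proof. bideg_lia. Qed.

Lemma mul_nz_posc_l (r1 r2 c d : Z) :
  posc r1 r2 -> M2deg c d -> posc c d || negc (r1 + c) (r2 + d) -> mul_nz r1 r2 c d.
Proof. bideg_lia. Qed.

Lemma common_multiple (p q a0 b0 a b : Z) :
  M2deg a0 b0 -> M2deg a b ->
  M2deg (a0 + p) (b0 + q) -> M2deg (a + p) (b + q) ->
  (negc a0 b0 -> negc (a0 + p) (b0 + q)) -> (negc a b -> negc (a + p) (b + q)) ->
  exists r1 r2 s1 s2 : Z,
    [/\ r1 + a0 = s1 + a, r2 + b0 = s2 + b,
        mul_nz r1 r2 a0 b0, mul_nz s1 s2 a b
      & mul_nz r1 r2 (a0 + p) (b0 + q) || mul_nz s1 s2 (a + p) (b + q)].
Proof.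
  move=> Mx My Mx' My' Ix Iy.
  case/orP: Mx => [Px|Nx]; case/orP: My => [Py|Ny].
  - (* z is the lcm of the two monomials *)
    clear Ix Iy; pose c := Z.max a0 a; pose d := c + Z.max (b0 - a0) (b - a).
    have Pr : posc (c - a0) (d - b0) by clear Mx' My'; bideg_lia.
    have Ps : posc (c - a) (d - b) by clear Mx' My'; bideg_lia.
    exists (c - a0), (d - b0), (c - a), (d - b); split.
    1-4: by clear Mx' My'; bideg_lia.
    case/orP: Mx' => [Px'|Nx'].
      by apply/orP; left; apply: mul_nz_posc_l => //; rewrite /M2deg Px'.
    case/orP: My' => [Py'|Ny'].
      by apply/orP; right; apply: mul_nz_posc_l => //; rewrite /M2deg Py'.
    apply/orP; left; apply: mul_nz_posc_l => //; first by rewrite /M2deg Nx' orbT.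
    apply/orP; right; bideg_lia.
  - move: (Iy Ny) => Ny'; clear Ix Iy Mx' My'.
    by exists (a - a0), (b - b0), 0, 0; split; bideg_lia.
  - move: (Ix Nx) => Nx'; clear Ix Iy Mx' My'.
    by exists 0, 0, (a0 - a), (b0 - b); split; bideg_lia.
  - (* z = theta / gcd of the two denominators *)
    move: (Ix Nx) (Iy Ny) => Nx' Ny'; clear Ix Iy Mx' My'.
    pose c := Z.max a0 a; pose n := Z.min (a0 - b0 - 2) (a - b - 2).
    by exists (c - a0), (c - 2 - n - b0), (c - a), (c - 2 - n - b); split; bideg_lia.
Qed.

Section HomToM2.

Variables (p q : Z) (J : Z -> Z -> bool -> Prop).
Hypothesis HJ : bigraded_ideal J.

Lemma hom_false (h : Z -> Z -> bool -> bool) :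
  is_hom p q J h -> forall a b : Z, h a b false = false.
Proof.
  move=> Hh a b.
  have := hom_add _ _ _ _ Hh a b false false (J_zero _ HJ a b) (J_zero _ HJ a b).
  by case: (h a b false).
Qed.

Lemma hom_mul_basis (h : Z -> Z -> bool -> bool) (r1 r2 a b : Z) :
  is_hom p q J h -> J a b true -> mul_nz r1 r2 a b ->
  h (r1 + a) (r2 + b) true = h a b true && mul_nz r1 r2 (a + p) (b + q).
Proof.
  move=> Hh Jab Hrx.
  have Hr : hom_elt r1 r2 true by move=> _; exact: mul_nz_M2deg_l Hrx.
  by rewrite -[true in h _ _ true]Hrx (hom_lin _ _ _ _ Hh _ _ _ _ _ _ Hr Jab).
Qed.

Lemma hom_image_deg (h : Z -> Z -> bool -> bool) (a b : Z) :
  is_hom p q J h -> J a b true -> h a b true ->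
  M2deg (a + p) (b + q) /\ (negc a b -> negc (a + p) (b + q)).
Proof.
  move=> Hh Jab Hab.
  have Hdeg : M2deg (a + p) (b + q) by exact: hom_deg _ _ _ _ Hh _ _ _ Jab Hab.
  split=> // Hneg.
  case Hpos: (posc (a + p) (b + q)); last by move: Hdeg; rewrite /M2deg Hpos.
  have Hr : hom_elt (1 - a) (1 - a) true by move=> _; bideg_lia.
  have := hom_lin _ _ _ _ Hh _ _ _ _ _ _ Hr Jab.
  have -> : mulM2 (1 - a) (1 - a) true a b true = false by bideg_lia.
  rewrite (hom_false Hh) Hab.
  have -> // : mulM2 (1 - a) (1 - a) true (a + p) (b + q) true = true by bideg_lia.
Qed.

Lemma hom_true_transfer (f g : Z -> Z -> bool -> bool) (a0 b0 a b : Z) :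
  is_hom p q J f -> is_hom p q J g ->
  J a0 b0 true -> f a0 b0 true -> g a0 b0 true ->
  J a b true -> f a b true -> g a b true.
Proof.
  move=> Hf Hg J0 F0 G0 Jab Fab.
  have [Ix0 Nx0] := hom_image_deg Hf J0 F0.
  have [Iy Ny] := hom_image_deg Hf Jab Fab.
  have [r1 [r2 [s1 [s2 [E1 E2 Rx Sy Hor]]]]] := common_multiple
    (J_sub _ HJ _ _ _ J0 eq_refl) (J_sub _ HJ _ _ _ Jab eq_refl) Ix0 Iy Nx0 Ny.
  have fz := hom_mul_basis Hf J0 Rx.
  have gz := hom_mul_basis Hg J0 Rx.
  rewrite E1 E2 (hom_mul_basis Hf Jab Sy) Fab F0 /= in fz.
  rewrite E1 E2 (hom_mul_basis Hg Jab Sy) G0 /= in gz.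
  have HS : mul_nz s1 s2 (a + p) (b + q) by move: Hor; rewrite -fz orbb.
  by move: gz; rewrite -fz HS andbT.
Qed.

End HomToM2.

Theorem lemmaA3 (p q : Z) (J : Z -> Z -> bool -> Prop) (f g : Z -> Z -> bool -> bool) :
  bigraded_ideal J -> is_hom p q J f -> is_hom p q J g ->
  (exists a b : Z, J a b true /\ f a b true <> false /\ f a b true = g a b true) ->
  forall (a b : Z) (x : bool), J a b x -> f a b x = g a b x.
Proof.
  move=> HJ Hf Hg [a0 [b0 [J0 [F0 FG0]]]] a b [] Jab; last first.
    by rewrite (hom_false HJ Hf) (hom_false HJ Hg).
  have F0' : f a0 b0 true by move: F0; case: (f a0 b0 true).
  have G0' : g a0 b0 true by rewrite -FG0.
  apply/eq_iff_eq_true; split=> Hab.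
  - exact (hom_true_transfer HJ Hf Hg J0 F0' G0' Jab Hab).
  - exact (hom_true_transfer HJ Hg Hf J0 G0' F0' Jab Hab).
Qed.
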